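(* Let $m\ge3$ be odd, let $s\ge2$ be even but not divisible by $4$, $n=sm$, and $\Gamma=C_n[mK_1]$. Let $\eta_1=(t,t,\dots,t)r$, $\eta_2=(\gamma_1,\dots,\gamma_n)z$ with $\gamma_{2i+1}=\gamma_{2i+2}=tc^{i}$ for $0\le i<n/2$, and $H=\langle\eta_1,\eta_2\rangle$. Then $\Gamma$ is the skeleton of a polytopal orientable reflexible map $\mathcal M$ of type $\{n,2m\}$ with $\mathrm{Aut}^+(\mathcal M)=H$.
   Context: $C_n[mK_1]$ is the graph with vertex set $\{1,\dots,n\}\times\{1,\dots,m\}$ in which $(i_1,j_1)$ is adjacent to $(i_2,j_2)$ if and only if $i_1\equiv i_2\pm1\pmod n$ (residues mod $n$ taken in $\{1,\dots,n\}$). Permutations act on the right ($x\alpha$ is the image of $x$) and products are composed left to right, both in $S_m$ and in $\mathrm{Aut}(\Gamma)$. For $\alpha_1,\dots,\alpha_n\in S_m$ and a permutation $x$ of $\{1,\dots,n\}$ in the dihedral group $D_n=\langle r,z\rangle$, $(\alpha_1,\dots,\alpha_n)x$ denotes the automorphism of $\Gamma$ mapping $(i,j)\mapsto(ix,\,j\alpha_i)$; $1$ denotes an identity permutation. Here $c=(1\,2\,\cdots\,m)\in S_m$; $t\in S_m$ fixes $1$ and maps $j\mapsto m-j+2$ for $2\le j\le m$; $r$ is the permutation $i\mapsto i+1 \pmod n$ of $\{1,\dots,n\}$; and $z$ fixes $1$ and maps $j\mapsto n-j+2$ for $2\le j\le n$. A map is a finite connected graph (its skeleton), viewed as a 1-dimensional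 CW complex, embedded in a closed surface so that every connected component of the complement (a face) is homeomorphic to an open disk. The map is polytopal if the boundary of each face is a cycle of the skeleton and every edge lies on the boundary of exactly two distinct faces. An automorphism of a map is an automorphism of the skeleton that extends to a homeomorphism of the surface; these form the group $\mathrm{Aut}(\mathcal M)$. A map is rotary if the stabiliser of each vertex contains a cyclic group acting transitively on the edges incident to it, and the stabiliser of each face contains a cyclic group acting transitively on the vertices (and edges) of the face; it has type $\{p,q\}$ if each face has $p$ edges on its boundary and the skeleton is $q$-valent. A rotary map is reflexible if the stabiliser of a face also contains an automorphism acting as a reflection of that face; a reflexible map is orientable or non-orientable according to its surface. For a polytopal rotary map and a flag (incident vertex–edge–face triple) $\Phi=(v,e,f)$, distinguished generators are automorphisms $\sigma_1,\sigma_2$ such that $\sigma_1$ preserves $f$ and acts as a one-step rotation of its boundary cycle, $\sigma_2$ fixes $v$ and acts as a one-step rotation of the edges around $v$, and $\sigma_1\sigma_2$ is an involution reversing $e$; the rotational group is $\mathrm{Aut}^+(\mathcal M)=\langle\sigma_1,\sigma_2\rangle$. *)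

From mathcomp Require Import all_boot all_fingroup.
Set Implicit Arguments. Unset Strict Implicit. Unset Printing Implicit Defensive.
Local Open Scope group_scope.

(* An edge is the 2-set [set x; y]; a face is encoded by its boundary  *)
(* cycle, i.e. the set of edges of that cycle; a map is a set of faces.*)

Definition is_gedge (V : finType) (adj : rel V) (e : {set V}) : bool :=
  [exists x, exists y, adj x y && (e == [set x; y])].

Definition fverts (V : finType) (f : {set {set V}}) : {set V} :=
  [set x | [exists e in f, x \in e]].

Definition is_cycle (V : finType) (adj : rel V) (f : {set {set V}}) : bool :=
  [&& f != set0, [forall e in f, is_gedge adj e],
      [forall x in fverts f, #|[set e in f | x \in e]| == 2%N] &
      [forall x in fverts f, forall y in fverts f,
          connect (fun a b : V => [set a; b] \in f) x y]].

(* u, w are consecutive neighbours of v: {v,u} and {v,w} lie on a common face *)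
Definition link (V : finType) (M : {set {set {set V}}}) (v u w : V) : bool :=
  (u != w) && [exists f in M, ([set v; u] \in f) && ([set v; w] \in f)].

(* M is a polytopal map with skeleton (V, adj): connected skeleton, faces
   are cycles of the skeleton, each edge on exactly two (distinct) faces,
   and the faces around each vertex form a single cycle (surface condition). *)
Definition polytopal_map (V : finType) (adj : rel V) (M : {set {set {set V}}}) : Prop :=
  [/\ forall x y : V, connect adj x y,
      forall f, f \in M -> is_cycle adj f,
      forall e, is_gedge adj e -> #|[set f in M | e \in f]| = 2%N &
      forall v u w, adj v u -> adj v w -> connect (link M v) u w].

Definition fimage (V : finType) (g : {perm V}) (f : {set {set V}}) : {set {set V}} :=
  [set [set g x | x in e] | e : {set V} in f].

Definition map_aut (V : finType) (adj : rel V) (M : {set {set {set V}}}) (g : {perm V}) : bool :=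
  [forall x, forall y, adj x y == adj (g x) (g y)] && [forall f in M, fimage g f \in M].

(* D is a cyclic orientation (set of darts) of the boundary cycle f *)
Definition cyc_orient (V : finType) (f : {set {set V}}) (D : {set V * V}) : bool :=
  [&& [forall d in D, [set d.1; d.2] \in f],
      [forall e in f, #|[set d in D | [set d.1; d.2] == e]| == 1%N] &
      [forall x in fverts f, #|[set d in D | d.1 == x]| == 1%N]].

Definition orientable (V : finType) (M : {set {set {set V}}}) : Prop :=
  exists O : {set {set V}} -> {set V * V},
    (forall f, f \in M -> cyc_orient f (O f)) /\
    (forall f g (x y : V), f \in M -> g \in M -> f != g ->
        (x, y) \in O f -> [set x; y] \in g -> (y, x) \in O g).

Definition rotary (V : finType) (adj : rel V) (M : {set {set {set V}}}) : Prop :=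
  (forall v : V, exists2 g, map_aut adj M g &
      g v = v /\
      (forall u w, adj v u -> adj v w ->
         exists k, [set (g ^+ k) x | x in [set v; u]] = [set v; w])) /\
  (forall f, f \in M -> exists2 g, map_aut adj M g &
      [/\ fimage g f = f,
          (forall x y, x \in fverts f -> y \in fverts f -> exists k, (g ^+ k) x = y) &
          (forall e e', e \in f -> e' \in f -> exists k, [set (g ^+ k) x | x in e] = e')]).

Definition acts_as_reflection (V : finType) (f : {set {set V}}) (g : {perm V}) : Prop :=
  fimage g f = f /\
  exists D, cyc_orient f D /\ (forall x y, (x, y) \in D -> (g y, g x) \in D).

Definition reflexible (V : finType) (adj : rel V) (M : {set {set {set V}}}) : Prop :=
  rotary adj M /\
  (forall f, f \in M -> exists2 g, map_aut adj M g & acts_as_reflection f g).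

Definition map_type (V : finType) (adj : rel V) (M : {set {set {set V}}}) (p q : nat) : Prop :=
  (forall f, f \in M -> #|f| = p) /\ (forall v : V, #|[set u | adj v u]| = q).

Definition dist_gens (V : finType) (adj : rel V) (M : {set {set {set V}}})
    (v : V) (e : {set V}) (f : {set {set V}}) (s1 s2 : {perm V}) : Prop :=
  [/\ [/\ f \in M, e \in f & v \in e],
      map_aut adj M s1 /\ map_aut adj M s2,
      fimage s1 f = f /\
        (exists D, cyc_orient f D /\ (forall x y, (x, y) \in D -> s1 x = y)),
      s2 v = v /\ (forall u, adj v u -> link M v u (s2 u)) &
      [/\ (s1 * s2) ^+ 2 = 1, s1 * s2 != 1 &
          forall x, x \in e -> ((s1 * s2) x \in e) && ((s1 * s2) x != x)]].

(* The graph C_n[mK_1] and the permutations of the statement,          *)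
(* with 0-based indices: paper's (i,j) is (i-1, j-1) here.            *)

Definition Cnm_adj (n m : nat) : rel ('I_n * 'I_m) :=
  fun p q => (q.1 == ordS p.1) || (p.1 == ordS q.1).

Definition cperm (m : nat) : {perm 'I_m} := perm (@ordS_inj m).
(* t : j |-> -j mod m (0-based), i.e. fixes 1 and j |-> m-j+2 (1-based) *)
Lemma tfun_inj (m : nat) : injective (fun j : 'I_m => ordS (rev_ord j)).
Proof. by move=> a b /ordS_inj /rev_ord_inj. Qed.
Definition tperm_ (m : nat) : {perm 'I_m} := perm (@tfun_inj m).
Definition rperm (n : nat) : {perm 'I_n} := cperm n.
Definition zperm (n : nat) : {perm 'I_n} := tperm_ n.

(* (alpha_1, ..., alpha_n) x : (i, j) |-> (i x, j alpha_i) *)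
Definition wr_fun (n m : nat) (a : 'I_n -> {perm 'I_m}) (x : {perm 'I_n})
  (p : 'I_n * 'I_m) : 'I_n * 'I_m := (x p.1, a p.1 p.2).
Lemma wr_inj (n m : nat) (a : 'I_n -> {perm 'I_m}) (x : {perm 'I_n}) :
  injective (wr_fun a x).
Proof.
by move=> [i j] [i' j'] [/perm_inj ei]; subst i'; move/perm_inj => ->.
Qed.
Definition wr (n m : nat) (a : 'I_n -> {perm 'I_m}) (x : {perm 'I_n}) :
  {perm 'I_n * 'I_m} := perm (@wr_inj n m a x).

Definition eta1 (n m : nat) : {perm 'I_n * 'I_m} := wr (fun _ => tperm_ m) (rperm n).
(* eta_2 = (gamma_1, ..., gamma_n) z, gamma_{2i+1} = gamma_{2i+2} = t c^i;
   0-based index k corresponds to paper's k+1, so gamma = t c^(k/2) *)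
Definition eta2 (n m : nat) : {perm 'I_n * 'I_m} :=
  wr (fun k : 'I_n => tperm_ m * cperm m ^+ (k %/ 2)) (zperm n).
Arguments Cnm_adj n m : clear implicits.

From mathcomp Require Import all_boot all_fingroup all_algebra.
From mathcomp Require Import ring zify.
Set Implicit Arguments. Unset Strict Implicit. Unset Printing Implicit Defensive.
Import GRing.Theory.

(* For a, d in Z_m and
   e in {0, 1}, the map i |-> a + d i + e floor(i/2) is well defined on Z_n because n is
   even and m divides n/2; its graph is an n-cycle of the skeleton meeting every layer
   once, and these 2m^2 cycles are the faces. Once e is fixed, the values at two
   consecutive layers determine a and d, so every edge lies on exactly one face with
   e = 0 and one with e = 1; orienting the former upwards and the latter downwards makes
   the map orientable. The permutations (i, j) |-> (x i, +-j + b i), with x a rotation or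
   reflection of Z_n and b the height function of a face, permute the faces: among them
   are eta1, eta2, vertical shifts, and a rotation and a reflection of every face. eta1
   rotates the face a = d = e = 0, and eta2 fixes (0, 0) and cycles its 2m neighbours
   through consecutive faces; conjugating by the vertex-transitive group of these
   permutations gives such a rotation at every vertex. *)

Lemma imset_set2 (aT rT : finType) (f : aT -> rT) x y :
  [set f z | z in [set x; y]] = [set f x; f y].
Proof. by rewrite imsetU1 imset_set1. Qed.

Section MapAutomorphisms.
Variables (V : finType) (adj : rel V) (M : {set {set {set V}}}).

Lemma fimage1 (f : {set {set V}}) : fimage 1%g f = f.
Proof.
rewrite /fimage -[RHS]imset_id; apply: eq_imset => e /=.
by rewrite -[RHS]imset_id; apply: eq_imset => x; rewrite perm1.
Qed.

Lemma fimageM (g h : {perm V}) (f : {set {set V}}) :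
  fimage (g * h)%g f = fimage h (fimage g f).
Proof.
rewrite /fimage -imset_comp; apply: eq_imset => e /=.
by rewrite -imset_comp; apply: eq_imset => x /=; rewrite permM.
Qed.

Lemma map_autP (g : {perm V}) :
  (forall x y, adj (g x) (g y) = adj x y) -> {in M, forall f, fimage g f \in M} ->
  map_aut adj M g.
Proof.
move=> gadj gM; apply/andP; split; last exact/forall_inP.
by apply/forallP => x; apply/forallP => y; rewrite gadj.
Qed.

Lemma map_aut_adj g x y : map_aut adj M g -> adj (g x) (g y) = adj x y.
Proof. by case/andP => /forallP /(_ x) /forallP /(_ y) /eqP ->. Qed.

Lemma map_aut_face g f : map_aut adj M g -> f \in M -> fimage g f \in M.
Proof. by case/andP => _ /forall_inP; apply. Qed.

Definition map_auts : {set {perm V}} := [set g | map_aut adj M g].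

Lemma map_autsE g : (g \in map_auts) = map_aut adj M g.
Proof. by rewrite inE. Qed.

Lemma map_auts_group_set : group_set map_auts.
Proof.
apply/group_setP; split.
  by rewrite map_autsE; apply: map_autP => [x y|f fM]; rewrite ?perm1 ?fimage1.
move=> g h; rewrite !map_autsE => ga ha.
apply: map_autP => [x y|f fM]; first by rewrite !permM !map_aut_adj.
by rewrite fimageM !map_aut_face.
Qed.

Canonical map_auts_group := Group map_auts_group_set.

Lemma link_map_aut h v u w : h \in map_auts -> link M v u w ->
  link M (h v) (h u) (h w).
Proof.
rewrite map_autsE => ha /andP [uw /existsP [f /andP [fM /andP [vu vw]]]].
apply/andP; split; first by rewrite (inj_eq perm_inj).
apply/existsP; exists (fimage h f); rewrite map_aut_face //=.
by rewrite -!imset_set2 !(imset_f (fun e : {set V} => [set h x | x in e])).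
Qed.

Lemma permX_fix (g : {perm V}) v k : g v = v -> (g ^+ k)%g v = v.
Proof. by move=> gv; elim: k => [|k IH]; rewrite ?expg0 ?perm1 // expgSr permM IH gv. Qed.

Definition vertex_rotation (v : V) (g : {perm V}) :=
  [/\ g \in map_auts, g v = v,
      forall u, adj v u -> link M v u (g u) &
      forall u w, adj v u -> adj v w -> exists k, (g ^+ k)%g u = w].

Lemma vertex_rotationJ v g h : h \in map_auts -> vertex_rotation v g ->
  vertex_rotation (h v) (g ^ h)%g.
Proof.
move=> ha [ga gv glink gtrans].
have adjV u : adj (h v) u = adj v (h^-1%g u).
  by rewrite -[in LHS](permKV h u) map_aut_adj -?map_autsE.
split; first by rewrite groupJ.
- by rewrite permJ gv.
- move=> u; rewrite adjV => /glink /(link_map_aut ha).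
  by rewrite permKV -permJ permKV.
- move=> u w; rewrite !adjV => /gtrans gt /gt [k gk]; exists k.
  by rewrite -conjXg -(permKV h u) permJ gk permKV.
Qed.

Lemma vertex_rotation_connect v g u w : vertex_rotation v g ->
  adj v u -> adj v w -> connect (link M v) u w.
Proof.
case=> ga gv glink gtrans vu vw; case: (gtrans _ _ vu vw) => k <-.
elim: k => [|k IH]; first by rewrite expg0 perm1 connect0.
apply: connect_trans IH (connect1 _); rewrite expgSr permM; apply: glink.
by rewrite -(permX_fix k gv) map_aut_adj // -map_autsE groupX.
Qed.

Lemma vertex_rotation_edges v g u w : vertex_rotation v g -> adj v u -> adj v w ->
  exists k, [set (g ^+ k)%g x | x in [set v; u]] = [set v; w].
Proof.
case=> _ gv _ gtrans vu vw; case: (gtrans _ _ vu vw) => k gk.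
by exists k; rewrite imset_set2 (permX_fix _ gv) gk.
Qed.

End MapAutomorphisms.

Section CyclicArithmetic.
Variable k : nat.
Local Open Scope ring_scope.

Lemma ordS_Zp (i : 'I_k.+2) : ordS i = i + 1.
Proof. by apply: val_inj => /=; rewrite modnDmr addn1. Qed.

Lemma tperm_Zp (j : 'I_k.+2) : tperm_ k.+2 j = - j.
Proof. by rewrite permE; apply: val_inj => /=; rewrite subnSK ?ltn_ord. Qed.

Lemma rperm_Zp (i : 'I_k.+2) : rperm k.+2 i = i + 1.
Proof. by rewrite /rperm /cperm permE ordS_Zp. Qed.

Lemma zperm_Zp (i : 'I_k.+2) : zperm k.+2 i = - i.
Proof. exact: tperm_Zp. Qed.

Lemma cpermX_Zp (c : nat) (j : 'I_k.+2) : (cperm k.+2 ^+ c)%g j = j + c%:R.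
Proof.
elim: c => [|c IH]; first by rewrite expg0 perm1 addr0.
by rewrite expgSr permM IH /cperm permE ordS_Zp -natr1 addrA.
Qed.

Lemma connect_Zp (T : finType) (R : rel T) (Q : 'I_k.+2 -> T) :
  (forall i, R (Q i) (Q (i + 1))) -> forall i j, connect R (Q i) (Q j).
Proof.
move=> RS i j; rewrite -(subrK i j) addrC -[j - i]natr_Zp.
elim: (val (j - i)) => [|t IH]; first by rewrite addr0 connect0.
by apply: connect_trans IH (connect1 _); rewrite -natr1 addrA RS.
Qed.

End CyclicArithmetic.

Section TransversalCycles.
Local Open Scope ring_scope.
Variables (n' m : nat).
Local Notation n := n'.+2.
Local Notation V := ('I_n * 'I_m)%type.
Local Notation adj := (Cnm_adj n m).

Lemma Cnm_adjE (x y : V) : adj x y = (y.1 == x.1 + 1) || (x.1 == y.1 + 1).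
Proof. by rewrite /Cnm_adj !ordS_Zp. Qed.

Lemma Cnm_adjP (x u : V) : adj x u -> u.1 = x.1 + 1 \/ u.1 = x.1 - 1.
Proof. by rewrite Cnm_adjE => /orP [] /eqP ->; [left | right; rewrite addrK]. Qed.

Lemma Cnm_connected (x y : V) : connect adj x y.
Proof.
apply: (connect_trans (y := (x.1 + 1, x.2))); first by rewrite connect1 // Cnm_adjE eqxx.
apply: (connect_trans (y := (y.1 + 1, x.2))); last by rewrite connect1 // Cnm_adjE eqxx orbT.
by apply: (connect_Zp (Q := fun i => (i, x.2))) => i; rewrite Cnm_adjE eqxx.
Qed.

Lemma Cnm_adj_shift (g : {perm V}) c : (forall x, (g x).1 = x.1 + c) ->
  forall x y, adj (g x) (g y) = adj x y.
Proof.
move=> gE x y; rewrite !Cnm_adjE !gE.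
have shiftE (a b : 'I_n) : (b + c == a + c + 1) = (b == a + 1).
  by rewrite addrAC (inj_eq (addIr c)).
by rewrite !shiftE.
Qed.

Lemma Cnm_adj_neg (g : {perm V}) : (forall x, (g x).1 = - x.1) ->
  forall x y, adj (g x) (g y) = adj x y.
Proof.
move=> gE x y; rewrite !Cnm_adjE !gE.
have negE (a b : 'I_n) : (- b == - a + 1) = (a == b + 1).
  by rewrite -subr_eq0 -[RHS]subr_eq0; congr (_ == 0); ring.
by rewrite !negE orbC.
Qed.

Hypothesis n_gt2 : (0 < n')%N.

Lemma addr1_neq (i : 'I_n) : i + 1 != i.
Proof. by rewrite -subr_eq0 addrAC subrr add0r oner_eq0. Qed.

Lemma addr2_neq (i : 'I_n) : i + 1 + 1 != i.
Proof.
rewrite -subr_eq0 (_ : i + 1 + 1 - i = 1 + 1); last by ring.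
by apply/eqP => /(congr1 val) /=; rewrite !modn_small //; lia.
Qed.

Lemma oner_neqN1 : (1 : 'I_n) != - 1.
Proof. by rewrite -subr_eq0 opprK; move: (addr2_neq 0); rewrite add0r. Qed.

Lemma card_Cnm_nbrs (v : V) : #|[set u | adj v u]| = (2 * m)%N.
Proof.
have layerE c : [set u : V | u.1 == c] = setX [set c] [set: 'I_m].
  by apply/setP => u; rewrite !inE andbT.
have -> : [set u | adj v u] = [set u : V | u.1 == v.1 + 1] :|: [set u : V | u.1 == v.1 - 1].
  by apply/setP => u; rewrite !inE Cnm_adjE; congr (_ || _); rewrite [RHS]eq_sym subr_eq.
rewrite cardsU (_ : _ :&: _ = set0) ?cards0 ?subn0.
  by rewrite !layerE !cardsX !cards1 cardsT card_ord mul1n mul2n addnn.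
apply/setP => u; rewrite !inE; apply/negbTE/andP => -[/eqP -> /eqP].
by move/(congr1 (fun z => z + 1)); rewrite subrK; apply/eqP/addr2_neq.
Qed.

Definition tedge (phi : 'I_n -> 'I_m) (i : 'I_n) : {set V} :=
  [set (i, phi i); (i + 1, phi (i + 1))].

Definition tcycle (phi : 'I_n -> 'I_m) : {set {set V}} := [set tedge phi i | i : 'I_n].

Lemma mem_tedge phi i : tedge phi i \in tcycle phi.
Proof. exact: imset_f. Qed.

Lemma tedge_set2 phi i (x y : V) : [set x; y] = tedge phi i ->
  (x = (i, phi i) /\ y = (i + 1, phi (i + 1))) \/
  (x = (i + 1, phi (i + 1)) /\ y = (i, phi i)).
Proof.
move=> xyE.
have xE : x \in tedge phi i by rewrite -xyE set21.
have yE : y \in tedge phi i by rewrite -xyE set22.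
have iE : (i, phi i) \in [set x; y] by rewrite xyE set21.
have iSE : (i + 1, phi (i + 1)) \in [set x; y] by rewrite xyE set22.
rewrite !inE in xE yE iE iSE.
case/orP: xE => /eqP ?; case/orP: yE => /eqP ?; subst x y; auto.
- by move: iSE; rewrite orbb => /eqP [/eqP]; rewrite (negbTE (addr1_neq _)).
- by move: iE; rewrite orbb => /eqP [/esym/eqP]; rewrite (negbTE (addr1_neq _)).
Qed.

Lemma tedge_eq phi psi i j : tedge phi i = tedge psi j ->
  [/\ i = j, phi i = psi i & phi (i + 1) = psi (i + 1)].
Proof.
move=> E; case: (tedge_set2 (esym E)) => -[[ji e1] [jSi e2]].
  by subst j; rewrite e1 e2.
by move: (addr2_neq i); rewrite -ji jSi eqxx.
Qed.

Lemma tedge_inj phi : injective (tedge phi).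
Proof. by move=> i j /tedge_eq []. Qed.

Lemma tcycle_eq phi psi : tcycle phi = tcycle psi -> phi =1 psi.
Proof.
move=> E i; have: tedge phi i \in tcycle psi by rewrite -E mem_tedge.
by case/imsetP => j _ /tedge_eq [].
Qed.

Lemma card_tcycle phi : #|tcycle phi| = n.
Proof. by rewrite card_imset ?card_ord //; apply: tedge_inj. Qed.

Lemma fverts_tcycle phi (x : V) : (x \in fverts (tcycle phi)) = (x.2 == phi x.1).
Proof.
case: x => i j; rewrite inE; apply/existsP/eqP => /= [[e /andP[/imsetP[l _ ->]]]|->].
  by rewrite !inE => /orP[] /eqP[-> ->].
by exists (tedge phi i); rewrite mem_tedge !inE eqxx.
Qed.

Lemma tcycle_is_cycle phi : is_cycle adj (tcycle phi).
Proof.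
apply/and4P; split.
- by apply/set0Pn; exists (tedge phi 0); apply: mem_tedge.
- apply/forall_inP => e /imsetP [i _ ->]; apply/existsP; exists (i, phi i).
  by apply/existsP; exists (i + 1, phi (i + 1)); rewrite Cnm_adjE /tedge /= !eqxx.
- apply/forall_inP => -[i j]; rewrite fverts_tcycle /= => /eqP ->.
  have -> : [set e in tcycle phi | (i, phi i) \in e] = [set tedge phi i; tedge phi (i - 1)].
    apply/setP => e; rewrite !inE; apply/andP/orP => [[/imsetP [l _ ->]]|].
      by rewrite !inE => /orP [] /eqP [il _]; [left | right]; rewrite il ?addrK.
    by case=> /eqP ->; rewrite mem_tedge !inE ?subrK eqxx ?orbT.
  rewrite cards2 (inj_eq (@tedge_inj phi)) -(inj_eq (addIr 1)) subrK.
  by rewrite eq_sym addr1_neq.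
- apply/forall_inP => -[i j]; rewrite fverts_tcycle => /eqP /= ->.
  apply/forall_inP => -[i' j']; rewrite fverts_tcycle => /eqP /= ->.
  by apply: (connect_Zp (Q := fun l => (l, phi l))) => l; apply: mem_tedge.
Qed.

Lemma fimage_tcycle_shift (g : {perm V}) phi psi c :
  (forall i, g (i, phi i) = (i + c, psi (i + c))) -> fimage g (tcycle phi) = tcycle psi.
Proof.
move=> gE; rewrite /fimage /tcycle -imset_comp.
apply/setP => e; apply/imsetP/imsetP => [[i _ ->]|[j _ ->]].
  by exists (i + c) => //=; rewrite imset_set2 !gE addrAC.
by exists (j - c) => //=; rewrite imset_set2 !gE subrK addrAC subrK.
Qed.

Lemma fimage_tcycle_neg (g : {perm V}) phi psi :
  (forall i, g (i, phi i) = (- i, psi (- i))) -> fimage g (tcycle phi) = tcycle psi.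
Proof.
move=> gE; rewrite /fimage /tcycle -imset_comp.
have negS (i : 'I_n) : - i = - (i + 1) + 1 by rewrite opprD addrNK.
apply/setP => e; apply/imsetP/imsetP => [[i _ ->]|[j _ ->]].
  by exists (- (i + 1)) => //=; rewrite imset_set2 !gE setUC /tedge -negS.
by exists (- (j + 1)) => //=; rewrite imset_set2 !gE -negS !opprK setUC.
Qed.

Definition fwd_darts (f : {set {set V}}) : {set V * V} :=
  [set d : V * V | ([set d.1; d.2] \in f) && (d.2.1 == d.1.1 + 1)].
Definition bwd_darts (f : {set {set V}}) : {set V * V} :=
  [set d : V * V | ([set d.1; d.2] \in f) && (d.1.1 == d.2.1 + 1)].

Lemma fwd_dartsP phi d :
  reflect (exists i, d = ((i, phi i), (i + 1, phi (i + 1)))) (d \in fwd_darts (tcycle phi)).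
Proof.
case: d => x y; rewrite inE /=.
apply: (iffP andP) => [[/imsetP [i _ /tedge_set2 [[-> ->]|[-> ->]]]] /=|[i [-> ->]]].
- by exists i.
- by rewrite eq_sym (negbTE (addr2_neq _)).
- by rewrite /= mem_tedge eqxx.
Qed.

Lemma bwd_dartsP phi d :
  reflect (exists i, d = ((i + 1, phi (i + 1)), (i, phi i))) (d \in bwd_darts (tcycle phi)).
Proof.
case: d => x y; rewrite inE /=.
apply: (iffP andP) => [[/imsetP [i _ /tedge_set2 [[-> ->]|[-> ->]]]] /=|[i [-> ->]]].
- by rewrite eq_sym (negbTE (addr2_neq _)).
- by exists i.
- by rewrite /= setUC mem_tedge eqxx.
Qed.

Lemma cyc_orient_fwd phi : cyc_orient (tcycle phi) (fwd_darts (tcycle phi)).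
Proof.
apply/and3P; split.
- by apply/forall_inP => d; rewrite inE => /andP [].
- apply/forall_inP => e /imsetP [i _ ->].
  rewrite (_ : [set d in _ | _] = [set ((i, phi i), (i + 1, phi (i + 1)))]) ?cards1 //.
  apply/setP => d; rewrite in_set in_set1; apply/andP/eqP => [[/fwd_dartsP [j ->]]|->].
    by move=> /eqP /tedge_inj ->.
  by split; [apply/fwd_dartsP; exists i | rewrite eqxx].
- apply/forall_inP => -[i j]; rewrite fverts_tcycle /= => /eqP ->.
  rewrite (_ : [set d in _ | _] = [set ((i, phi i), (i + 1, phi (i + 1)))]) ?cards1 //.
  apply/setP => d; rewrite in_set in_set1; apply/andP/eqP => [[/fwd_dartsP [l ->]]|->].
    by move=> /eqP [->].
  by split; [apply/fwd_dartsP; exists i | rewrite eqxx].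
Qed.

Lemma cyc_orient_bwd phi : cyc_orient (tcycle phi) (bwd_darts (tcycle phi)).
Proof.
apply/and3P; split.
- by apply/forall_inP => d; rewrite inE => /andP [].
- apply/forall_inP => e /imsetP [i _ ->].
  rewrite (_ : [set d in _ | _] = [set ((i + 1, phi (i + 1)), (i, phi i))]) ?cards1 //.
  apply/setP => d; rewrite in_set in_set1; apply/andP/eqP => [[/bwd_dartsP [j ->]]|->].
    by rewrite /= setUC => /eqP /tedge_inj ->.
  by split; [apply/bwd_dartsP; exists i | rewrite /= setUC eqxx].
- apply/forall_inP => -[i j]; rewrite fverts_tcycle /= => /eqP ->.
  rewrite (_ : [set d in _ | _] = [set ((i, phi i), (i - 1, phi (i - 1)))]) ?cards1 //.
  apply/setP => d; rewrite in_set in_set1; apply/andP/eqP => [[/bwd_dartsP [l ->]]|->].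
    by move=> /eqP [<-]; rewrite addrK.
  by split; [apply/bwd_dartsP; exists (i - 1); rewrite subrK | rewrite eqxx].
Qed.

End TransversalCycles.

Section Faces.
Local Open Scope ring_scope.
Variables (n' k : nat).
Local Notation n := n'.+2.
Local Notation m := k.+2.
Local Notation V := ('I_n * 'I_m)%type.
Local Notation adj := (Cnm_adj n m).
Hypotheses (n_gt2 : (0 < n')%N) (n_even : ~~ odd n) (m_dvd_half : (m %| n./2)%N).

Lemma half_Zm : (n./2)%:R = 0 :> 'I_m.
Proof. by apply: val_inj; rewrite Zp_nat /=; apply/eqP. Qed.

Lemma n_Zm : n%:R = 0 :> 'I_m.
Proof. by rewrite -(even_halfK n_even) -addnn natrD half_Zm addr0. Qed.

Lemma natr_modn x : (x %% n)%:R = x%:R :> 'I_m.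
Proof. by rewrite [in RHS](divn_eq x n) natrD natrM n_Zm mulr0 add0r. Qed.

Lemma natr_half_modn x : ((x %% n)./2)%:R = (x./2)%:R :> 'I_m.
Proof.
have qnE : (x %/ n * n)./2 = (x %/ n * n./2)%N.
  by rewrite -[X in (_ * X)./2](even_halfK n_even) -doubleMr doubleK.
rewrite [in RHS](divn_eq x n) halfD oddM (negbTE n_even) andbF andFb add0n.
by rewrite qnE natrD natrM half_Zm mulr0 add0r.
Qed.

Definition toZm (i : 'I_n) : 'I_m := (val i)%:R.
Definition halfZm (i : 'I_n) : 'I_m := ((val i)./2)%:R.

Lemma toZm0 : toZm 0 = 0. Proof. by []. Qed.
Lemma halfZm0 : halfZm 0 = 0. Proof. by []. Qed.

Lemma toZmS i : toZm (i + 1) = toZm i + 1.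
Proof. by rewrite /toZm /= modnDmr natr_modn natrD. Qed.

Lemma halfZmS i : halfZm (i + 1) = toZm i - halfZm i.
Proof.
rewrite /halfZm /toZm /= modnDmr natr_half_modn addn1.
have halfS : ((i.+1)./2 + i./2 = i)%N by rewrite -uphalfE uphalf_half -addnA addnn odd_double_half.
by rewrite -[in X in _ = X - _]halfS natrD addrK.
Qed.

Lemma toZmN i : toZm (- i) = - toZm i.
Proof. by rewrite /toZm /= natr_modn natrB ?n_Zm ?sub0r // ltnW. Qed.

Lemma halfZmN i : halfZm (- i) = halfZm i - toZm i.
Proof.
rewrite /halfZm /toZm /= natr_half_modn.
have le_in : (i <= n)%N := ltnW (ltn_ord i).
have halfB : ((n - i)./2 + i = n./2 + i./2)%N.
  have := halfD (n - i) i; rewrite subnK // oddB // (negbTE n_even) /=.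
  have := odd_double_half i; rewrite -muln2; case: (odd i) => /=; lia.
by apply: (addIr (val i)%:R); rewrite -natrD halfB natrD half_Zm add0r subrK.
Qed.

Lemma toZm1 : toZm 1 = 1.
Proof. by rewrite -[1]add0r toZmS toZm0 add0r. Qed.

Lemma halfZm1 : halfZm 1 = 0.
Proof. by rewrite -[1]add0r halfZmS toZm0 halfZm0 subr0. Qed.

Lemma halfZmN1 : halfZm (- 1) = - 1.
Proof. by rewrite halfZmN halfZm1 toZm1 sub0r. Qed.

Local Notation param := ('I_m * 'I_m * 'I_m)%type.

(* p = (a, d, e) gives layer i the height a + d i + e floor(i/2), computed from the
   representative of i in [0, n); this respects the cyclic order of Z_n only because
   m divides n/2. *)
Definition height (p : param) (i : 'I_n) : 'I_m :=
  p.1.1 + p.1.2 * toZm i + p.2 * halfZm i.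

Definition face (p : param) : {set {set V}} := tcycle (height p).
Definition face_params : {set param} := [set p | (p.2 == 0) || (p.2 == 1)].
Definition faces : {set {set {set V}}} := [set face p | p in face_params].

Definition pshift (p : param) : param := (p.1.1 + p.1.2, p.1.2 + p.2, - p.2).
Definition punshift (p : param) : param := (p.1.1 - p.1.2 - p.2, p.1.2 + p.2, - p.2).
Definition pneg (p : param) : param := (p.1.1, - (p.1.2 + p.2), p.2).

Lemma heightD p q i : height (p + q) i = height p i + height q i.
Proof. by rewrite /height /=; ring. Qed.

Lemma heightN p i : height (- p) i = - height p i.
Proof. by rewrite /height /=; ring. Qed.

Lemma heightS p i : height p (i + 1) = height p i + p.1.2 + p.2 * (toZm i - halfZm i *+ 2).
Proof. by rewrite /height toZmS halfZmS; ring. Qed.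

Lemma height_pshift p i : height (pshift p) i = height p (i + 1).
Proof. by rewrite heightS /height /=; ring. Qed.

Lemma height_punshift p i : height (punshift p) (i + 1) = height p i.
Proof. by rewrite heightS /height /=; ring. Qed.

Lemma height_pneg p i : height (pneg p) i = height p (- i).
Proof. by rewrite /height toZmN halfZmN /=; ring. Qed.

Lemma height0 p : height p 0 = p.1.1.
Proof. by rewrite /height toZm0 halfZm0 !mulr0 !addr0. Qed.

Lemma height1 p : height p 1 = p.1.1 + p.1.2.
Proof. by rewrite /height toZm1 halfZm1 mulr1 mulr0 addr0. Qed.

Lemma heightN1 p : height p (- 1) = p.1.1 - p.1.2 - p.2.
Proof. by rewrite -height_pneg height1 /=; ring. Qed.

Lemma height_eq_param p q i : p.2 = q.2 -> height p i = height q i ->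
  height p (i + 1) = height q (i + 1) -> p = q.
Proof.
case: p q => [[a d] e] [[a' d'] e'] /= <- hi.
rewrite !heightS hi => /addIr /addrI /= dE; subst d'.
by move: hi; rewrite /height /= => /addIr /addIr ->.
Qed.

Lemma face_inj : injective face.
Proof.
move=> p q /tcycle_eq pqE.
have e_of r : r.2 = height r (1 + 1) - height r 1 *+ 2 + height r 0.
  by rewrite heightS height1 height0 toZm1 halfZm1; ring.
apply: (height_eq_param (i := 0)); last by rewrite !pqE.
  by rewrite e_of [RHS]e_of !pqE.
by rewrite pqE.
Qed.

Lemma faces_cycle f : f \in faces -> is_cycle adj f.
Proof. by case/imsetP => p _ ->; apply: tcycle_is_cycle. Qed.

(* The solution p, with p.2 = e, of height p x.1 = x.2 and height p (x.1 + 1) = y.2. *)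
Definition edge_param (x y : V) (e : 'I_m) : param :=
  let d := y.2 - x.2 - e * (toZm x.1 - halfZm x.1 *+ 2) in
  (x.2 - d * toZm x.1 - e * halfZm x.1, d, e).

Lemma edge_param_face x y e : y.1 = x.1 + 1 -> [set x; y] \in face (edge_param x y e).
Proof.
move=> yE; set p := edge_param x y e.
have x_at : height p x.1 = x.2 by rewrite /height /=; ring.
have y_at : height p (x.1 + 1) = y.2 by rewrite heightS x_at /=; ring.
have -> : [set x; y] = tedge (height p) x.1.
  by rewrite /tedge x_at y_at -yE -!surjective_pairing.
exact: mem_tedge.
Qed.

Lemma edge_paramP x y p : y.1 = x.1 + 1 -> [set x; y] \in face p ->
  p = edge_param x y p.2.
Proof.
move=> yE /imsetP [i _ /tedge_set2 [[xE yE']|[xE yE']]]; last first.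
  by move: yE; rewrite xE yE' /= => /eqP; rewrite eq_sym (negbTE (addr2_neq n_gt2 _)).
have x_at : height p x.1 = x.2 by rewrite xE.
have y_at : height p (x.1 + 1) = y.2 by rewrite -yE yE'.
apply: (height_eq_param (i := x.1)) => //; rewrite ?x_at ?y_at.
  by rewrite /height /=; ring.
by rewrite heightS /height /=; ring.
Qed.

Lemma face_edge_uniq p q x y : [set x; y] \in face p -> [set x; y] \in face q ->
  p.2 = q.2 -> p = q.
Proof.
move=> /imsetP [i _ ->] /imsetP [j _ /(tedge_eq n_gt2) [_ hi hiS]] e2.
exact: height_eq_param e2 hi hiS.
Qed.

Lemma card_faces_edge x y : y.1 = x.1 + 1 -> #|[set f in faces | [set x; y] \in f]| = 2.
Proof.
move=> yE.
have -> : [set f in faces | [set x; y] \in f] =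
          [set face (edge_param x y 0); face (edge_param x y 1)].
  apply/setP => f; rewrite !inE; apply/andP/orP => [[/imsetP [p pP ->] /(edge_paramP yE) pE]|].
    by move: pP; rewrite inE => /orP [] /eqP p2; rewrite pE p2; [left | right].
  by case=> /eqP ->; rewrite edge_param_face // imset_f // inE eqxx ?orbT.
rewrite cards2 (inj_eq face_inj); suff -> : edge_param x y 0 != edge_param x y 1 by [].
by apply/eqP => /(congr1 snd) /eqP; rewrite eq_sym oner_eq0.
Qed.

Lemma faces_edge_count e : is_gedge adj e -> #|[set f in faces | e \in f]| = 2.
Proof.
case/existsP => x /existsP [y /andP [+ /eqP ->]]; rewrite Cnm_adjE => /orP [] /eqP yE.
  exact: card_faces_edge.
by rewrite setUC; apply: card_faces_edge.
Qed.

(* Faces with e = 0 are oriented by increasing layer index, those with e = 1 by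
   decreasing index; the two faces on an edge then induce opposite directions. *)
Definition orient (f : {set {set V}}) : {set V * V} :=
  if [exists p : param, (p.2 == 0) && (f == face p)] then fwd_darts f else bwd_darts f.

Lemma orient_face p : orient (face p) = if p.2 == 0 then fwd_darts (face p) else bwd_darts (face p).
Proof.
rewrite /orient; case: ifP => [/existsP [q /andP [/eqP q2 /eqP /face_inj ->]]|].
  by rewrite q2 eqxx.
by case: eqP => // p2 /existsP []; exists p; rewrite p2 !eqxx.
Qed.

Lemma faces_orientable : orientable faces.
Proof.
exists orient; split.
  move=> _ /imsetP [p _ ->]; rewrite orient_face.
  by case: ifP => _; [apply: cyc_orient_fwd | apply: cyc_orient_bwd].
move=> _ _ x y /imsetP [p pP ->] /imsetP [q qP ->] pq.
rewrite !orient_face => xy_p xy_q.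
have xyp : [set x; y] \in face p by move: xy_p; case: ifP => _; rewrite inE => /andP [].
have pq2 : p.2 != q.2 by apply: contra pq => /eqP pq2; rewrite (face_edge_uniq xyp xy_q pq2).
move: pP qP pq2 xy_p; rewrite !inE => /orP [] /eqP -> /orP [] /eqP ->;
  by rewrite ?eqxx ?oner_eq0 //= !inE /= [[set y; x]]setUC xy_q => _ /andP [_ ->].
Qed.

Definition affine_fun (x : {perm 'I_n}) (neg : bool) (r : param) (v : V) : V :=
  (x v.1, (if neg then - v.2 else v.2) + height r v.1).

Lemma affine_fun_inj x neg r : injective (affine_fun x neg r).
Proof.
move=> [i j] [i' j'] E; have /= /perm_inj ii' := congr1 fst E; subst i'.
by move: (congr1 snd E) => /= /addIr; case: neg {E} => [/oppr_inj|] ->.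
Qed.

Definition affine x neg r : {perm V} := perm (@affine_fun_inj x neg r).

Lemma affineE x neg r i j :
  affine x neg r (i, j) = (x i, (if neg then - j else j) + height r i).
Proof. by rewrite permE. Qed.

Lemma affine_height x neg r p i :
  affine x neg r (i, height p i) = (x i, height ((if neg then - p else p) + r) i).
Proof. by rewrite affineE heightD; case: neg; rewrite ?heightN. Qed.

Lemma affine_shift_aut r : r.2 = 0 -> affine (rperm n) true r \in map_auts adj faces.
Proof.
move=> r2; rewrite map_autsE; apply: map_autP.
  by apply: (Cnm_adj_shift (c := 1)) => -[i j]; rewrite affineE rperm_Zp.
move=> _ /imsetP [p pP ->]; apply/imsetP; exists (punshift (- p + r)).
  by move: pP; rewrite !inE /= r2 addr0 opprK.
apply: (fimage_tcycle_shift (c := 1)) => i.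
by rewrite affine_height rperm_Zp height_punshift.
Qed.

Lemma affine_flip_aut neg r : r.2 = (if neg then 1 else 0) ->
  affine (zperm n) neg r \in map_auts adj faces.
Proof.
move=> r2; rewrite map_autsE; apply: map_autP.
  by apply: Cnm_adj_neg => -[i j]; rewrite affineE zperm_Zp.
move=> _ /imsetP [p pP ->]; apply/imsetP; exists (pneg ((if neg then - p else p) + r)).
  move: pP; rewrite !inE /=; case: neg r2 => /= -> /orP [] /eqP ->;
  by rewrite ?oppr0 ?add0r ?addr0 ?addNr eqxx ?orbT.
apply: fimage_tcycle_neg => i.
by rewrite affine_height zperm_Zp height_pneg opprK.
Qed.

Lemma affine_vshift_aut r : r.2 = 0 -> affine 1 false r \in map_auts adj faces.
Proof.
move=> r2; rewrite map_autsE; apply: map_autP.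
  by apply: (Cnm_adj_shift (c := 0)) => -[i j]; rewrite affineE perm1 addr0.
move=> _ /imsetP [p pP ->]; apply/imsetP; exists (p + r).
  by move: pP; rewrite !inE /= r2 addr0.
by apply: (fimage_tcycle_shift (c := 0)) => i; rewrite affine_height perm1 addr0.
Qed.

Lemma eta1_affine : eta1 n m = affine (rperm n) true 0.
Proof.
apply/permP => -[i j]; rewrite affineE permE /wr_fun /= tperm_Zp.
by rewrite /height /= !mul0r !addr0.
Qed.

Lemma eta2_affine : eta2 n m = affine (zperm n) true (0, 0, 1).
Proof.
apply/permP => -[i j]; rewrite affineE permE /wr_fun /= permM tperm_Zp cpermX_Zp.
by rewrite /height /halfZm /= divn2 !mul0r mul1r !add0r.
Qed.

Lemma eta1E i j : eta1 n m (i, j) = (i + 1, - j).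
Proof. by rewrite eta1_affine affineE rperm_Zp /height /= !mul0r !addr0. Qed.

Lemma eta2E i j : eta2 n m (i, j) = (- i, - j + halfZm i).
Proof. by rewrite eta2_affine affineE zperm_Zp /height /= !mul0r mul1r !add0r. Qed.

Lemma eta1_aut : eta1 n m \in map_auts adj faces.
Proof. by rewrite eta1_affine affine_shift_aut. Qed.

Lemma eta2_aut : eta2 n m \in map_auts adj faces.
Proof. by rewrite eta2_affine affine_flip_aut. Qed.

Definition face_rot (q : param) : {perm V} := affine (rperm n) true (q + pshift q).
Definition face_refl (q : param) : {perm V} := affine (zperm n) false (pneg q - q).

Lemma face_rot_aut q : face_rot q \in map_auts adj faces.
Proof. by apply: affine_shift_aut; rewrite /= addrN. Qed.

Lemma face_refl_aut q : face_refl q \in map_auts adj faces.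
Proof. by apply: affine_flip_aut; rewrite /= addrN. Qed.

Lemma face_rotX q t i : (face_rot q ^+ t)%g (i, height q i) = (i + t%:R, height q (i + t%:R)).
Proof.
elim: t => [|t IH]; first by rewrite expg0 perm1 addr0.
rewrite expgSr permM IH affineE rperm_Zp heightD height_pshift addKr.
by rewrite -natr1 addrA.
Qed.

Lemma face_refl_at q i : face_refl q (i, height q i) = (- i, height q (- i)).
Proof. by rewrite affine_height zperm_Zp addrC subrK height_pneg. Qed.

Lemma faces_rotation f : f \in faces -> exists2 g, map_aut adj faces g &
  [/\ fimage g f = f,
      forall x y, x \in fverts f -> y \in fverts f -> exists k, (g ^+ k)%g x = y &
      forall e e', e \in f -> e' \in f -> exists k, [set (g ^+ k)%g x | x in e] = e'].
Proof.
case/imsetP => q _ ->; exists (face_rot q); first by rewrite -map_autsE face_rot_aut.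
split.
- by apply: (fimage_tcycle_shift (c := 1)) => i; rewrite -[face_rot q]expg1 face_rotX.
- move=> [i j] [i' j']; rewrite !fverts_tcycle /= => /eqP -> /eqP ->.
  by exists (val (i' - i)); rewrite face_rotX natr_Zp addrC subrK.
- move=> _ _ /imsetP [i _ ->] /imsetP [j _ ->]; exists (val (j - i)).
  by rewrite imset_set2 !face_rotX natr_Zp addrAC [i + _]addrC subrK.
Qed.

Lemma faces_reflection f : f \in faces -> exists2 g, map_aut adj faces g & acts_as_reflection f g.
Proof.
case/imsetP => q _ ->; exists (face_refl q); first by rewrite -map_autsE face_refl_aut.
split; first by apply: fimage_tcycle_neg => i; rewrite face_refl_at.
exists (fwd_darts (face q)); split; first exact: cyc_orient_fwd.
move=> x y /(fwd_dartsP n_gt2) [i [-> ->]]; apply/(fwd_dartsP n_gt2); exists (- (i + 1)).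
by rewrite !face_refl_at opprD addrNK.
Qed.

Lemma face_edges_at0 p : p.1.1 = 0 ->
  [set (0, 0); (1, p.1.2)] \in face p /\ [set (0, 0); (- 1, - p.1.2 - p.2)] \in face p.
Proof.
move=> a0; split.
  by have := mem_tedge (height p) 0; rewrite /tedge add0r height0 height1 a0 add0r.
by have := mem_tedge (height p) (- 1); rewrite /tedge addNr height0 heightN1 a0 sub0r setUC.
Qed.

Lemma eta2X_even t y : (eta2 n m ^+ (2 * t))%g (1, y) = (1, y - t%:R).
Proof.
elim: t y => [|t IH] y; first by rewrite muln0 expg0 perm1 subr0.
rewrite mulnS expgD permM expgS expg1 permM !eta2E opprK halfZm1 halfZmN1 IH.
by rewrite -natr1 addr0 opprK; congr (_, _); ring.
Qed.

Lemma eta2_link u : adj (0, 0) u -> link faces (0, 0) u (eta2 n m u).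
Proof.
case: u => i y /Cnm_adjP [] /= ->; rewrite ?add0r ?sub0r eta2E ?opprK ?halfZm1 ?halfZmN1.
  apply/andP; split; first by rewrite xpair_eqE (negbTE (oner_neqN1 n_gt2)).
  apply/existsP; exists (face (0, y, 0)); rewrite imset_f ?inE ?eqxx //=.
  have [/= e1 e2] := face_edges_at0 (p := (0, y, 0)) erefl.
  by rewrite subr0 in e2; rewrite addr0 e1 e2.
apply/andP; split; first by rewrite xpair_eqE eq_sym (negbTE (oner_neqN1 n_gt2)).
apply/existsP; exists (face (0, - y - 1, 1)); rewrite imset_f ?inE ?eqxx ?orbT //=.
have [/= e1 e2] := face_edges_at0 (p := (0, - y - 1, 1)) erefl.
by rewrite (_ : - (- y - 1) - 1 = y) in e2; rewrite ?e1 ?e2 //; ring.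
Qed.

(* eta2 swaps the layers 1 and -1 of neighbours of (0, 0), and eta2^2 moves
   (1, y) to (1, y - 1): one orbit of size 2m. *)
Lemma eta2_vertex_rotation : vertex_rotation adj faces (0, 0) (eta2 n m).
Proof.
split; [exact: eta2_aut | by rewrite eta2E halfZm0 oppr0 addr0 oppr0 | exact: eta2_link |].
have toOne u : adj (0, 0) u -> exists t, (eta2 n m ^+ t)%g u = (1, 0).
  case: u => i y /Cnm_adjP [] /= ->; rewrite ?add0r ?sub0r.
    by exists (2 * val y)%N; rewrite eta2X_even natr_Zp subrr.
  exists (2 * val (- y - 1)).+1; rewrite expgS permM eta2E opprK halfZmN1 eta2X_even.
  by rewrite natr_Zp; congr (_, _); ring.
have fromOne u : adj (0, 0) u -> exists t, (eta2 n m ^+ t)%g (1, 0) = u.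
  case: u => i y /Cnm_adjP [] /= ->; rewrite ?add0r ?sub0r.
    by exists (2 * val (- y))%N; rewrite eta2X_even natr_Zp sub0r opprK.
  exists (2 * val y).+1; rewrite expgSr permM eta2X_even eta2E halfZm1 natr_Zp.
  by rewrite sub0r opprK addr0.
move=> u w /toOne [a ua] /fromOne [b wb]; exists (a + b)%N.
by rewrite expgD permM ua wb.
Qed.

Lemma eta1X_origin t : (eta1 n m ^+ t)%g (0, 0) = (t%:R, 0).
Proof.
elim: t => [|t IH]; first by rewrite expg0 perm1.
by rewrite expgSr permM IH eta1E oppr0 natr1.
Qed.

Lemma faces_vertex_rotation v : exists g, vertex_rotation adj faces v g.
Proof.
pose h := (eta1 n m ^+ val v.1 * affine 1 false (v.2, 0, 0))%g.
have h_aut : h \in map_auts adj faces by rewrite groupM ?groupX ?eta1_aut ?affine_vshift_aut.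
have hv : h (0, 0) = v.
  rewrite permM eta1X_origin affineE perm1 natr_Zp add0r /height /= !mul0r !addr0.
  by case: v {h h_aut}.
by exists (eta2 n m ^ h)%g; rewrite -hv; apply: vertex_rotationJ eta2_vertex_rotation.
Qed.

Lemma eta_dist_gens :
  dist_gens adj faces (0, 0) [set (0, 0); (- 1, 0)] (face 0) (eta1 n m) (eta2 n m).
Proof.
have zero_height i : height 0 i = 0 by rewrite /height /= !mul0r !addr0.
have eta12E i j : (eta1 n m * eta2 n m)%g (i, j) = (- (i + 1), j + halfZm (i + 1)).
  by rewrite permM eta1E eta2E opprK.
split.
- split; [by rewrite imset_f ?inE ?eqxx | | exact: set21].
  by have := mem_tedge (height 0) (- 1); rewrite /tedge addNr !zero_height setUC.
- by split; rewrite -map_autsE ?eta1_aut ?eta2_aut.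
- split; first by apply: (fimage_tcycle_shift (c := 1)) => i; rewrite !zero_height eta1E oppr0.
  exists (fwd_darts (face 0)); split; first exact: cyc_orient_fwd.
  by move=> x y /(fwd_dartsP n_gt2) [i [-> ->]]; rewrite !zero_height eta1E oppr0.
- split; [by rewrite eta2E halfZm0 oppr0 addr0 oppr0 | exact: eta2_link].
split.
- apply/permP => -[i j]; rewrite expgS expg1 permM !eta12E perm1.
  rewrite (_ : - (i + 1) + 1 = - i) ?opprK ?halfZmN ?halfZmS; last by ring.
  by congr (_, _); ring.
- apply/eqP => /permP /(_ (0, 0)); rewrite eta12E perm1 add0r => /(congr1 fst) /eqP.
  by rewrite /= oppr_eq0 oner_eq0.
- move=> x; rewrite !inE => /orP [] /eqP ->; rewrite eta12E.
    rewrite add0r halfZm1 addr0 eqxx orbT /=.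
    by rewrite xpair_eqE oppr_eq0 oner_eq0.
  rewrite addNr halfZm0 addr0 oppr0 eqxx /=.
  by rewrite xpair_eqE eq_sym oppr_eq0 oner_eq0.
Qed.

Theorem Cnm_reflexible_map : exists M : {set {set {set V}}},
  [/\ polytopal_map adj M, orientable M, reflexible adj M, map_type adj M n (2 * m) &
      exists v e f (s1 s2 : {perm V}),
        dist_gens adj M v e f s1 s2 /\ <<[set s1; s2]>>%g = <<[set eta1 n m; eta2 n m]>>%g].
Proof.
exists faces; split.
- split; [exact: Cnm_connected | exact: faces_cycle | exact: faces_edge_count |].
  by move=> v u w vu vw; have [g /vertex_rotation_connect] := faces_vertex_rotation v; apply.
- exact: faces_orientable.
- split; last exact: faces_reflection.
  split; last exact: faces_rotation.
  move=> v; have [g gv] := faces_vertex_rotation v; have [g_aut g_fix _ _] := gv.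
  exists g; first by rewrite -map_autsE.
  by split => // u w; apply: vertex_rotation_edges gv.
- by split; [move=> _ /imsetP [p _ ->]; apply: card_tcycle | apply: card_Cnm_nbrs].
- by exists (0, 0), [set (0, 0); (- 1, 0)], (face 0), (eta1 n m), (eta2 n m); split;
    first exact: eta_dist_gens.
Qed.

End Faces.

Theorem proposition5p7 (m s n : nat)
  (hm3 : 3 <= m) (hmodd : odd m)
  (hs2 : 2 <= s) (hseven : ~~ odd s) (hs4 : ~~ (4 %| s))
  (hn : n = s * m) :
  exists M : {set {set {set ('I_n * 'I_m)}}},
    [/\ polytopal_map (Cnm_adj n m) M,
        orientable M,
        reflexible (Cnm_adj n m) M,
        map_type (Cnm_adj n m) M n (2 * m) &
        exists v e f (s1 s2 : {perm 'I_n * 'I_m}),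
          dist_gens (Cnm_adj n m) M v e f s1 s2 /\
          <<[set s1; s2]>>%g = <<[set eta1 n m; eta2 n m]>>%g].
Proof.
case: m hm3 hmodd hn => [|[|k]] // hm3 _ hn.
case: n hn => [|[|n']] hn; try by exfalso; nia.
apply: Cnm_reflexible_map.
- nia.
- by rewrite hn oddM (negbTE hseven).
- by rewrite hn -(even_halfK hseven) -doubleMl doubleK dvdn_mull.
Qed.
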